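(* Let $\mathbf P=(P,\leq,{}',0,1)$ be a poset with complementation such that its Dedekind-MacNeille completion $\mathrm{DM}(\mathbf P)$ is an orthomodular lattice. Then $\mathbf P$ is pseudo-orthomodular.
   Context: For $M\subseteq P$, $U(M)$ and $L(M)$ are the sets of upper and lower bounds of $M$; $U(a,b)=U(\{a,b\})$ etc. A poset with complementation is a bounded poset with antitone involution $'$ ($x\le y\Rightarrow y'\le x'$, $x''=x$) with $L(x,x')=\{0\}$, $U(x,x')=\{1\}$. It is pseudo-orthomodular if $L(U(L(x,y),y'),y)=L(x,y)$ for all $x,y\in P$, equivalently $U(L(U(x,y),y'),y)=U(x,y)$. The Dedekind-MacNeille completion $\mathrm{DM}(\mathbf P)$ is the complete lattice of subsets $B\subseteq P$ with $L(U(B))=B$ ordered by inclusion, $P$ embedded via $x\mapsto L(\{x\})$, with the antitone involution $X'=L(\{u'\mid u\in X\})$. A lattice with complementation is orthomodular if $x\vee y=((x\vee y)\wedge y')\vee y$ for all $x,y$. *)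

Definition set (P : Type) := P -> Prop.

Definition seteq {P : Type} (A B : set P) : Prop := forall x, A x <-> B x.
Definition subset {P : Type} (A B : set P) : Prop := forall x, A x -> B x.
Definition setU {P : Type} (A B : set P) : set P := fun x => A x \/ B x.
Definition setI {P : Type} (A B : set P) : set P := fun x => A x /\ B x.
Definition set1 {P : Type} (a : P) : set P := fun x => x = a.
Definition set2 {P : Type} (a b : P) : set P := fun x => x = a \/ x = b.
Definition setT {P : Type} : set P := fun _ => True.

Section Bounds.
Context {P : Type} (le : P -> P -> Prop).
Definition Ub (M : set P) : set P := fun u => forall m, M m -> le m u.
Definition Lb (M : set P) : set P := fun l => forall m, M m -> le l m.
End Bounds.

Definition poset_with_complementation {P : Type} (le : P -> P -> Prop)
    (c : P -> P) (z o : P) : Prop :=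
  (forall x, le x x) /\
  (forall x y, le x y -> le y x -> x = y) /\
  (forall x y w, le x y -> le y w -> le x w) /\
  (forall x, le z x) /\ (forall x, le x o) /\
  (forall x y, le x y -> le (c y) (c x)) /\
  (forall x, c (c x) = x) /\
  (forall x, seteq (Lb le (set2 x (c x))) (set1 z)) /\
  (forall x, seteq (Ub le (set2 x (c x))) (set1 o)).

(* Pseudo-orthomodularity: L(U(L(x,y),y'),y) = L(x,y), where
   U(A,b) = U(A ∪ {b}). *)
Definition pseudo_orthomodular {P : Type} (le : P -> P -> Prop) (c : P -> P) : Prop :=
  forall x y : P,
    seteq (Lb le (setU (Ub le (setU (Lb le (set2 x y)) (set1 (c y)))) (set1 y)))
          (Lb le (set2 x y)).

(* Dedekind-MacNeille completion DM(P): the subsets B with L(U(B)) = B,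
   ordered by inclusion. *)
Section DM.
Context {P : Type} (le : P -> P -> Prop) (c : P -> P).

Definition DM_closed (B : set P) : Prop := seteq (Lb le (Ub le B)) B.
Definition DM_meet (A B : set P) : set P := setI A B.
Definition DM_join (A B : set P) : set P := Lb le (Ub le (setU A B)).
Definition DM_bot : set P := Lb le (Ub le (fun _ => False)).
Definition DM_top : set P := setT.
Definition DM_compl (X : set P) : set P := Lb le (fun v => exists u, X u /\ v = c u).

(* DM(P), with the involution ', is an orthomodular lattice:
   it is a lattice with complementation (X ∧ X' = 0, X ∨ X' = 1)
   satisfying X ∨ Y = ((X ∨ Y) ∧ Y') ∨ Y for all X, Y in DM(P).
   (The complete-lattice structure and the antitone involution are
   automatic for DM(P).) *)
Definition DM_orthomodular : Prop :=
  (forall X, DM_closed X -> seteq (DM_meet X (DM_compl X)) DM_bot) /\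
  (forall X, DM_closed X -> seteq (DM_join X (DM_compl X)) DM_top) /\
  (forall X Y, DM_closed X -> DM_closed Y ->
     seteq (DM_join X Y) (DM_join (DM_meet (DM_join X Y) (DM_compl Y)) Y)).
End DM.

(* Test pseudo-orthomodularity in DM(P) on the principal ideals X = L(x') and
   Y = L(y').  If t lies in L(U(L(x,y),y'),y), then t' is an upper bound of
   ((X ∨ Y) ∧ Y') ∪ Y, so by the orthomodular law it bounds X ∨ Y, which
   contains x'; hence x' <= t', i.e. t <= x. *)


Section PosetWithInvolution.

Variables (P : Type) (le : P -> P -> Prop) (c : P -> P).

Hypothesis le_refl : forall x, le x x.
Hypothesis le_trans : forall x y w, le x y -> le y w -> le x w.
Hypothesis compl_anti : forall x y, le x y -> le (c y) (c x).
Hypothesis complK : forall x, c (c x) = x.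

Definition down (a : P) : set P := fun w => le w a.

Lemma compl_swap x y : le x (c y) -> le y (c x).
Proof.
  intros Hxy. rewrite <- (complK y). apply compl_anti. exact Hxy.
Qed.

Lemma down_DM_closed a : DM_closed le (down a).
Proof.
  intros w; split; intros Hw.
  - apply Hw. intros m Hm. exact Hm.
  - intros u Hu. apply le_trans with a; [exact Hw | apply Hu, le_refl].
Qed.

Lemma subset_DM_join_l A B : subset A (DM_join le A B).
Proof.
  intros w Hw u Hu. apply Hu. left. exact Hw.
Qed.

Lemma DM_join_down_le a b u w :
  le a u -> le b u -> DM_join le (down a) (down b) w -> le w u.
Proof.
  intros Hau Hbu Hw. apply Hw.
  intros m [Hm | Hm]; eapply le_trans; eauto.
Qed.

Lemma DM_compl_down_le a w : DM_compl le c (down a) w -> le w (c a).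
Proof.
  intros Hw. apply Hw. exists a. split; [apply le_refl | reflexivity].
Qed.

Lemma Lb2_compl_le x y a :
  Lb le (set2 x y) a -> le (c x) (c a) /\ le (c y) (c a).
Proof.
  intros Ha. split; apply compl_anti, Ha; [left | right]; reflexivity.
Qed.

Lemma Lb2_sub_pseudo_om x y :
  subset (Lb le (set2 x y))
         (Lb le (setU (Ub le (setU (Lb le (set2 x y)) (set1 (c y)))) (set1 y))).
Proof.
  intros t Ht m [Hm | Hm].
  - apply Hm. left. exact Ht.
  - rewrite Hm. apply Ht. right. reflexivity.
Qed.

Lemma compl_Ub_meet_join x y t :
  Lb le (setU (Ub le (setU (Lb le (set2 x y)) (set1 (c y)))) (set1 y)) t ->
  Ub le (setU (DM_meet (DM_join le (down (c x)) (down (c y)))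
                       (DM_compl le c (down (c y))))
              (down (c y)))
     (c t).
Proof.
  intros Ht.
  assert (Hty : le t y) by (apply Ht; right; reflexivity).
  intros m [[Hjoin Hcompl] | Hm].
  - assert (Hmy : le m y).
    { rewrite <- (complK y). exact (DM_compl_down_le _ _ Hcompl). }
    apply compl_swap, Ht. left.
    intros a [Ha | Ha].
    + apply compl_swap. destruct (Lb2_compl_le _ _ _ Ha) as [Hxa Hya].
      exact (DM_join_down_le _ _ _ _ Hxa Hya Hjoin).
    + rewrite Ha. apply compl_anti. exact Hmy.
  - apply le_trans with (c y); [exact Hm | apply compl_anti, Hty].
Qed.

Lemma pseudo_orthomodular_of_DM_law :
  (forall X Y, DM_closed le X -> DM_closed le Y ->
     seteq (DM_join le X Y)
           (DM_join le (DM_meet (DM_join le X Y) (DM_compl le c Y)) Y)) ->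
  pseudo_orthomodular le c.
Proof.
  intros Hom x y t; split; [| apply Lb2_sub_pseudo_om].
  intros Ht.
  assert (Hx : DM_join le (down (c x)) (down (c y)) (c x))
    by (apply subset_DM_join_l, le_refl).
  apply (Hom _ _ (down_DM_closed _) (down_DM_closed _)) in Hx.
  assert (Hxt : le (c x) (c t)) by exact (Hx _ (compl_Ub_meet_join _ _ _ Ht)).
  assert (Htx : le t x).
  { rewrite <- (complK t), <- (complK x). apply compl_anti, Hxt. }
  intros m [Hm | Hm]; rewrite Hm; [exact Htx | apply Ht; right; reflexivity].
Qed.

End PosetWithInvolution.

Theorem theorem4 (P : Type) (le : P -> P -> Prop) (c : P -> P) (z o : P) :
  poset_with_complementation le c z o ->
  DM_orthomodular le c ->
  pseudo_orthomodular le c.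
Proof.
  intros [Hrefl [_ [Htrans [_ [_ [Hanti [HcK _]]]]]]] [_ [_ Hom]].
  exact (pseudo_orthomodular_of_DM_law _ _ _ Hrefl Htrans Hanti HcK Hom).
Qed.
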